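(* Let $G$ be a plane embedded graph whose external boundary is a simple cycle, and let $f$ be a convex combination map of $G$ which is an embedding. Then every bounded face of the straight-edge embedding determined by $f$ is convex.
   Context: Vertices on the external boundary cycle $C$ are external, others internal. A convex combination map of $G$ is a map $f$ from vertices to $\mathbb{R}^2$ such that the external vertices are mapped bijectively, in cyclic order along $C$, to the corners of a convex polygon $P$, and there are coefficients $\lambda_{uv}\ge0$, $\sum_v\lambda_{uv}=1$, $\lambda_{uv}>0$ iff ($u$ internal and $v$ a neighbour of $u$), with $f(u)=\sum_v\lambda_{uv}f(v)$ for every internal $u$. $f$ is an embedding if vertex images are distinct and the segments $[f(u),f(v)]$ for edges $\{u,v\}$ have pairwise disjoint relative interiors containing no vertex images. *)

From Stdlib Require Import Reals Lra List.
Import ListNotations.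
Open Scope R_scope.

Definition pt := (R * R)%type.

Definition padd (a b : pt) : pt := (fst a + fst b, snd a + snd b).
Definition pscale (t : R) (a : pt) : pt := (t * fst a, t * snd a).

Definition lerp (a b : pt) (t : R) : pt := padd (pscale (1 - t) a) (pscale t b).

Definition closed_seg (a b x : pt) : Prop :=
  exists t, 0 <= t <= 1 /\ x = lerp a b t.
Definition open_seg (a b x : pt) : Prop :=
  exists t, 0 < t < 1 /\ x = lerp a b t.

Definition orient (a b c : pt) : R :=
  (fst b - fst a) * (snd c - snd a) - (snd b - snd a) * (fst c - fst a).

Fixpoint rsum (n : nat) (g : nat -> R) : R :=
  match n with
  | O => 0
  | S m => rsum m g + g m
  end.

Definition simple_graph (n : nat) (adj : nat -> nat -> Prop) : Prop :=
  (forall u v, adj u v -> (u < n)%nat /\ (v < n)%nat) /\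
  (forall u v, adj u v -> adj v u) /\
  (forall u, ~ adj u u).

Definition simple_cycle (n : nat) (adj : nat -> nat -> Prop) (C : list nat) : Prop :=
  (3 <= length C)%nat /\ NoDup C /\ (forall v, In v C -> (v < n)%nat) /\
  (forall i, (i < length C)%nat ->
     adj (nth i C O) (nth (S i mod length C) C O)).

Definition external (C : list nat) (v : nat) : Prop := In v C.
Definition internal (n : nat) (C : list nat) (v : nat) : Prop :=
  (v < n)%nat /\ ~ In v C.

Definition convex_polygon_corners (k : nat) (P : nat -> pt) : Prop :=
  (3 <= k)%nat /\
  exists s : R, (s = 1 \/ s = -1) /\
    forall i j, (i < k)%nat -> (j < k)%nat -> j <> i -> j <> (S i mod k)%nat ->
      0 < s * orient (P i) (P (S i mod k)) (P j).

Definition convex_combination_map (n : nat) (adj : nat -> nat -> Prop)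
    (C : list nat) (f : nat -> pt) : Prop :=
  (forall i j, (i < length C)%nat -> (j < length C)%nat ->
      f (nth i C O) = f (nth j C O) -> i = j) /\
  convex_polygon_corners (length C) (fun i => f (nth i C O)) /\
  exists lam : nat -> nat -> R,
    forall u, internal n C u ->
      (forall v, (v < n)%nat -> 0 <= lam u v) /\
      (forall v, (v < n)%nat -> (0 < lam u v <-> adj u v)) /\
      rsum n (fun v => lam u v) = 1 /\
      fst (f u) = rsum n (fun v => lam u v * fst (f v)) /\
      snd (f u) = rsum n (fun v => lam u v * snd (f v)).

Definition is_embedding (n : nat) (adj : nat -> nat -> Prop) (f : nat -> pt) : Prop :=
  (forall u v, (u < n)%nat -> (v < n)%nat -> f u = f v -> u = v) /\
  (forall u v u' v', adj u v -> adj u' v' ->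
     ~ ((u = u' /\ v = v') \/ (u = v' /\ v = u')) ->
     forall x, open_seg (f u) (f v) x -> ~ open_seg (f u') (f v') x) /\
  (forall u v w, adj u v -> (w < n)%nat -> ~ open_seg (f u) (f v) (f w)).

Definition drawing (n : nat) (adj : nat -> nat -> Prop) (f : nat -> pt) (x : pt) : Prop :=
  (exists v, (v < n)%nat /\ x = f v) \/
  (exists u v, adj u v /\ closed_seg (f u) (f v) x).

Definition path_in_compl (D : pt -> Prop) (x y : pt) : Prop :=
  exists g : R -> pt,
    continuity (fun t => fst (g t)) /\ continuity (fun t => snd (g t)) /\
    g 0 = x /\ g 1 = y /\ (forall t, 0 <= t <= 1 -> ~ D (g t)).

Definition face (n : nat) (adj : nat -> nat -> Prop) (f : nat -> pt) (F : pt -> Prop) : Prop :=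
  exists x0, ~ drawing n adj f x0 /\
    forall x, F x <-> path_in_compl (drawing n adj f) x0 x.

Definition bounded_region (F : pt -> Prop) : Prop :=
  exists M, forall x, F x -> Rabs (fst x) <= M /\ Rabs (snd x) <= M.

Definition convex_set (F : pt -> Prop) : Prop :=
  forall x y t, F x -> F y -> 0 <= t <= 1 -> F (lerp x y t).

From Stdlib Require Import Reals List Lra Lia Psatz Classical.
Open Scope R_scope.
Set Implicit Arguments.

(** Fix a bounded face [F] with base point [x0].  The proof shows that the
    segment from [x0] to any point of [F] avoids the drawing ("is free");
    convexity then follows because, for [x, y] in [F], the whole triangle
    [x0 x y] is free, so [x0] is joined to every point of [x y] by a free
    segment.  The engine is a discrete maximum principle: an affine function
    of the plane never has a strict local minimum, in the lexicographic sense,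
    at an internal vertex of a convex combination map ([internal_descent]),
    and at a corner of the outer convex polygon it decreases along a polygon
    edge whenever it is smaller somewhere inside ([external_descent]).
    From these we get, in order:
    - the drawing lies in the closed outer polygon, and the base point of a
      bounded face lies strictly inside it ([bounded_face_inside]);
    - a triangle with apex inside the polygon whose two legs at the apex are
      free is entirely free ([triangle_free], [free_triangle]): its lowest
      vertex for a suitable lexicographic key would have a lower neighbour
      whose edge leaves the triangle through a leg;
    - free segments compose ([free_trans]), so by openness of the complement
      of the drawing and a supremum argument, a path avoiding the drawing
      from an interior point ends at a point seen along a free segment
      ([path_free]). *)

Lemma rsum_ext n g h : (forall v, (v < n)%nat -> g v = h v) -> rsum n g = rsum n h.
Proof.
  induction n as [|n IH]; intros Hgh; simpl; [reflexivity|].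
  rewrite IH by (intros; apply Hgh; lia). rewrite Hgh by lia. reflexivity.
Qed.

Lemma rsum_affine n (l x y : nat -> R) a b c :
  rsum n (fun v => l v * (a * x v + b * y v + c)) =
  a * rsum n (fun v => l v * x v) + b * rsum n (fun v => l v * y v) + c * rsum n l.
Proof. induction n as [|n IH]; simpl; [ring|]. rewrite IH. ring. Qed.

Lemma rsum_nonneg n g : (forall v, (v < n)%nat -> 0 <= g v) -> 0 <= rsum n g.
Proof.
  induction n as [|n IH]; intros Hg; simpl; [lra|].
  assert (0 <= rsum n g) by (apply IH; intros; apply Hg; lia).
  assert (0 <= g n) by (apply Hg; lia). lra.
Qed.

Lemma rsum_nonneg_zero n g : (forall v, (v < n)%nat -> 0 <= g v) -> rsum n g = 0 ->
  forall v, (v < n)%nat -> g v = 0.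
Proof.
  induction n as [|n IH]; simpl; intros Hg Hsum v Hv; [lia|].
  assert (0 <= rsum n g) by (apply rsum_nonneg; intros; apply Hg; lia).
  assert (0 <= g n) by (apply Hg; lia).
  destruct (Nat.eq_dec v n) as [->|Hne]; [lra|].
  apply IH; [intros; apply Hg; lia | lra | lia].
Qed.

Lemma rsum_exists_nonzero n g : rsum n g <> 0 -> exists v, (v < n)%nat /\ g v <> 0.
Proof.
  induction n as [|n IH]; simpl; intros Hsum; [lra|].
  destruct (Req_dec (g n) 0) as [E|E].
  - destruct IH as [v [Hv Hg]]; [lra|]. exists v; split; [lia|exact Hg].
  - exists n; split; [lia|exact E].
Qed.

Definition lex_lt (a1 a2 b1 b2 : R) : Prop := a1 < b1 \/ (a1 = b1 /\ a2 < b2).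

Lemma lex_min (Q : nat -> Prop) (phi psi : nat -> R) N :
  (exists v, (v < N)%nat /\ Q v) ->
  exists v, (v < N)%nat /\ Q v /\
    forall w, (w < N)%nat -> Q w -> ~ lex_lt (phi w) (psi w) (phi v) (psi v).
Proof.
  induction N as [|N IH]; intros [v0 [Hv0 Qv0]]; [lia|].
  destruct (classic (exists v, (v < N)%nat /\ Q v)) as [Hex|Hnex].
  - destruct (IH Hex) as [m [Hm [Qm Hmin]]].
    destruct (classic (Q N /\ lex_lt (phi N) (psi N) (phi m) (psi m))) as [[QN Hlt]|Hno].
    + exists N; repeat split; [lia|exact QN|].
      intros w Hw Qw Hl. destruct (Nat.eq_dec w N) as [->|Hne].
      * unfold lex_lt in Hl; lra.
      * apply (Hmin w); [lia|exact Qw|]. unfold lex_lt in *; lra.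
    + exists m; repeat split; [lia|exact Qm|].
      intros w Hw Qw Hl. destruct (Nat.eq_dec w N) as [->|Hne].
      * apply Hno; auto.
      * apply (Hmin w); [lia|exact Qw|exact Hl].
  - assert (Hv0N : v0 = N) by (apply NNPP; intro; apply Hnex; exists v0; split; [lia|exact Qv0]).
    subst v0. exists N; repeat split; [lia|exact Qv0|].
    intros w Hw Qw Hl. destruct (Nat.eq_dec w N) as [->|Hne].
    + unfold lex_lt in Hl; lra.
    + apply Hnex; exists w; split; [lia|exact Qw].
Qed.

(** First exit from a region cut out by finitely many affine constraints:
    along a segment, constraint [j] takes the value [(1-t) a_j + t b_j]. *)
Lemma first_exit N (a b : nat -> R) :
  (forall j, (j < N)%nat -> 0 <= a j) ->
  (exists j, (j < N)%nat /\ b j <= 0 /\ b j < a j) ->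
  exists t m, 0 <= t <= 1 /\ (m < N)%nat /\ (1 - t) * a m + t * b m = 0 /\
    forall j, (j < N)%nat -> 0 <= (1 - t) * a j + t * b j.
Proof.
  intros Ha Hex.
  set (cross := fun j => a j / (a j - b j)).
  destruct (lex_min (fun j => b j <= 0 /\ b j < a j) cross (fun _ => 0) Hex)
    as [m [Hm [[Hbm Habm] Hmin]]].
  assert (Hcross : forall j, b j < a j -> cross j * (a j - b j) = a j)
    by (intros j Hj; unfold cross; field; lra).
  pose proof (Ha m Hm) as Ham.
  assert (Ht : 0 <= cross m <= 1).
  { split.
    - unfold cross, Rdiv. apply Rmult_le_pos; [lra|]. apply Rlt_le, Rinv_0_lt_compat; lra.
    - apply Rmult_le_reg_r with (a m - b m); [lra|]. rewrite Hcross; lra. }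
  exists (cross m), m. split; [exact Ht|]. split; [exact Hm|]. split.
  - pose proof (Hcross m Habm). nra.
  - intros j Hj. pose proof (Ha j Hj) as Haj.
    destruct (classic (b j <= 0 /\ b j < a j)) as [[Hbj Habj]|Hout].
    + (* constraint [j] becomes tight no earlier than constraint [m] *)
      assert (Hle : cross m <= cross j)
        by (apply Rnot_lt_le; intro Hlt; apply (Hmin j Hj (conj Hbj Habj)); left; exact Hlt).
      assert (Hbefore : cross m * (a j - b j) <= cross j * (a j - b j))
        by (apply Rmult_le_compat_r; lra).
      rewrite Hcross in Hbefore by exact Habj. nra.
    + (* constraint [j] holds at both ends *)
      assert (0 <= b j) by (apply NNPP; intro; apply Hout; lra). nra.
Qed.

(** On a line through the origin, [l]-scaling a point between [a] and [b]
    lands between the origin and [a], or between the origin and [b]. *)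
Lemma scaled_between a b l t : 0 <= l <= 1 -> 0 <= t <= 1 ->
  exists m, 0 <= m <= 1 /\
    (l * ((1 - t) * a + t * b) = m * a \/ l * ((1 - t) * a + t * b) = m * b).
Proof.
  intros Hl Ht.
  assert (Hpos : forall a b, 0 < (1 - t) * a + t * b -> exists m, 0 <= m <= 1 /\
            (l * ((1 - t) * a + t * b) = m * a \/ l * ((1 - t) * a + t * b) = m * b)).
  { clear a b. intros a b Hc. set (c := (1 - t) * a + t * b) in *.
    assert (Hext : c <= a \/ c <= b).
    { destruct (Rle_dec c a) as [Ha|Ha]; [left; exact Ha|right].
      apply Rnot_lt_le. intro Hb. apply Rnot_le_lt in Ha.
      assert (0 <= t * (c - b)) by (apply Rmult_le_pos; lra).
      destruct (Req_dec t 1) as [Ht1|Ht1]; [unfold c in *; subst t; lra|].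
      assert (0 < (1 - t) * (c - a)) by (apply Rmult_lt_0_compat; lra).
      unfold c in *. nra. }
    destruct Hext as [Hca|Hcb].
    - exists (l * c / a). split; [split|left; field; lra].
      + unfold Rdiv. apply Rmult_le_pos; [nra|apply Rlt_le, Rinv_0_lt_compat; lra].
      + apply Rmult_le_reg_r with a; [lra|]. unfold Rdiv. rewrite Rmult_assoc, Rinv_l; nra.
    - exists (l * c / b). split; [split|right; field; lra].
      + unfold Rdiv. apply Rmult_le_pos; [nra|apply Rlt_le, Rinv_0_lt_compat; lra].
      + apply Rmult_le_reg_r with b; [lra|]. unfold Rdiv. rewrite Rmult_assoc, Rinv_l; nra. }
  destruct (Rtotal_order ((1 - t) * a + t * b) 0) as [Hneg|[Hzero|Hc]].
  - destruct (Hpos (- a) (- b)) as [m [Hm [E|E]]]; [lra| |];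
      exists m; split; [exact Hm| |exact Hm|]; [left|right]; lra.
  - exists 0. split; [lra|]. left. rewrite Hzero. ring.
  - exact (Hpos a b Hc).
Qed.

Ltac pt_eq := unfold lerp, padd, pscale; simpl; apply injective_projections; simpl; ring.

Lemma lerp_0 a b : lerp a b 0 = a. Proof. pt_eq. Qed.
Lemma lerp_1 a b : lerp a b 1 = b. Proof. pt_eq. Qed.
Lemma lerp_same a t : lerp a a t = a. Proof. pt_eq. Qed.

Lemma seg_start a b : closed_seg a b a.
Proof. exists 0. split; [lra|]. symmetry; apply lerp_0. Qed.
Lemma seg_end a b : closed_seg a b b.
Proof. exists 1. split; [lra|]. symmetry; apply lerp_1. Qed.
Lemma seg_sym a b p : closed_seg a b p -> closed_seg b a p.
Proof. intros [t [Ht ->]]. exists (1 - t). split; [lra|]. pt_eq. Qed.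

Lemma seg_sub a b q r p : closed_seg a b q -> closed_seg a b r -> closed_seg q r p ->
  closed_seg a b p.
Proof.
  intros [t1 [Ht1 ->]] [t2 [Ht2 ->]] [t [Ht ->]].
  exists ((1 - t) * t1 + t * t2). split; [nra|]. pt_eq.
Qed.

Definition affine (a b : R) (g : pt -> R) : Prop :=
  forall p, g p = a * fst p + b * snd p + g (0, 0).

Lemma affine_lerp a b g : affine a b g ->
  forall p q t, g (lerp p q t) = (1 - t) * g p + t * g q.
Proof.
  intros Hg p q t. rewrite (Hg (lerp p q t)), (Hg p), (Hg q).
  unfold lerp, padd, pscale; simpl. ring.
Qed.

Lemma affine_add a1 b1 a2 b2 g h : affine a1 b1 g -> affine a2 b2 h ->
  affine (a1 + a2) (b1 + b2) (fun p => g p + h p).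
Proof. intros Hg Hh p. rewrite (Hg p), (Hh p). ring. Qed.

Lemma affine_orient s a b :
  affine (- s * (snd b - snd a)) (s * (fst b - fst a)) (fun p => s * orient a b p).
Proof. intros p. unfold orient; simpl. ring. Qed.

Definition separating (g h : pt -> R) : Prop :=
  forall p q, g p = g q -> h p = h q -> p = q.

Lemma separating_det a1 b1 a2 b2 g h : affine a1 b1 g -> affine a2 b2 h ->
  a1 * b2 - a2 * b1 <> 0 -> separating g h.
Proof.
  intros Hg Hh Hdet [p1 p2] [q1 q2] Ep Eq.
  rewrite (Hg (p1, p2)), (Hg (q1, q2)) in Ep. rewrite (Hh (p1, p2)), (Hh (q1, q2)) in Eq.
  simpl in Ep, Eq.
  assert (D1 : a1 * (p1 - q1) + b1 * (p2 - q2) = 0) by lra.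
  assert (D2 : a2 * (p1 - q1) + b2 * (p2 - q2) = 0) by lra.
  assert (E1 : (a1 * b2 - a2 * b1) * (p1 - q1) = 0).
  { replace ((a1 * b2 - a2 * b1) * (p1 - q1)) with
      (b2 * (a1 * (p1 - q1) + b1 * (p2 - q2)) - b1 * (a2 * (p1 - q1) + b2 * (p2 - q2))) by ring.
    rewrite D1, D2. ring. }
  assert (E2 : (a1 * b2 - a2 * b1) * (p2 - q2) = 0).
  { replace ((a1 * b2 - a2 * b1) * (p2 - q2)) with
      (a1 * (a2 * (p1 - q1) + b2 * (p2 - q2)) - a2 * (a1 * (p1 - q1) + b1 * (p2 - q2))) by ring.
    rewrite D1, D2. ring. }
  apply Rmult_integral in E1, E2. f_equal; lra.
Qed.

Lemma sqdist_pos a b : a <> b ->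
  0 < (fst b - fst a) * (fst b - fst a) + (snd b - snd a) * (snd b - snd a).
Proof.
  intros Hab. destruct a as [a1 a2], b as [b1 b2]; simpl.
  destruct (Req_dec (b1 - a1) 0) as [E1|E1]; [destruct (Req_dec (b2 - a2) 0) as [E2|E2]|].
  - exfalso. apply Hab. f_equal; lra.
  - pose proof (Rsqr_pos_lt _ E2). pose proof (Rle_0_sqr (b1 - a1)). unfold Rsqr in *. lra.
  - pose proof (Rsqr_pos_lt _ E1). pose proof (Rle_0_sqr (b2 - a2)). unfold Rsqr in *. lra.
Qed.

Lemma collinear_lerp a b p : a <> b -> orient a b p = 0 -> exists t, p = lerp a b t.
Proof.
  intros Hab Hor. pose proof (sqdist_pos Hab) as HN.
  destruct a as [a1 a2], b as [b1 b2], p as [p1 p2]. unfold orient in Hor; simpl in *.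
  set (N := (b1 - a1) * (b1 - a1) + (b2 - a2) * (b2 - a2)) in HN.
  exists (((p1 - a1) * (b1 - a1) + (p2 - a2) * (b2 - a2)) / N).
  unfold lerp, padd, pscale; simpl. f_equal; apply Rminus_diag_uniq.
  - match goal with |- ?L = 0 => replace L with
      (- (b2 - a2) * ((b1 - a1) * (p2 - a2) - (b2 - a2) * (p1 - a1)) / N)
      by (unfold N in *; field; lra) end.
    rewrite Hor. unfold Rdiv. ring.
  - match goal with |- ?L = 0 => replace L with
      ((b1 - a1) * ((b1 - a1) * (p2 - a2) - (b2 - a2) * (p1 - a1)) / N)
      by (unfold N in *; field; lra) end.
    rewrite Hor. unfold Rdiv. ring.
Qed.

Lemma corner_cone s a b g A V B X : affine a b g ->
  0 < s * orient A V B -> 0 < s * orient A V X -> 0 < s * orient V B X ->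
  g V <= g A -> g V <= g B -> g V <= g X.
Proof.
  intros Hg HAVB HAVX HVBX HA HB.
  (* Cramer's rule for the coordinates of [X - V] in the basis [A - V, B - V] *)
  assert (Cramer : (s * orient A V B) * (g X - g V) =
            (s * orient V B X) * (g A - g V) + (s * orient A V X) * (g B - g V)).
  { rewrite (Hg X), (Hg V), (Hg A), (Hg B). unfold orient. ring. }
  assert (Hrhs : 0 <= (s * orient V B X) * (g A - g V) + (s * orient A V X) * (g B - g V)).
  { apply Rplus_le_le_0_compat; apply Rmult_le_pos; lra. }
  apply Rnot_lt_le. intro Hlt.
  assert ((s * orient A V B) * (g X - g V) < 0) by (apply Rmult_pos_neg; lra).
  lra.
Qed.

Lemma on_edge s A B Q E p :
  0 < s * orient Q A B -> 0 < s * orient B E A ->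
  s * orient A B p = 0 -> 0 <= s * orient Q A p -> 0 <= s * orient B E p ->
  closed_seg A B p.
Proof.
  intros HQAB HBEA Hp HQ HE.
  assert (Hs : s <> 0) by (intro; subst; lra).
  assert (HAB : A <> B) by (intro; subst; unfold orient in HQAB; nra).
  assert (Hline : orient A B p = 0)
    by (apply Rmult_integral in Hp; destruct Hp; [contradiction|assumption]).
  destruct (collinear_lerp HAB Hline) as [t ->].
  rewrite (affine_lerp (affine_orient s Q A)) in HQ.
  rewrite (affine_lerp (affine_orient s B E)) in HE.
  assert (HQAA : orient Q A A = 0) by (unfold orient; ring).
  assert (HBEB : orient B E B = 0) by (unfold orient; ring).
  rewrite HQAA in HQ. rewrite HBEB in HE.
  exists t. split; [|reflexivity]. split; nra.
Qed.

Lemma flat_triangle_sides x z1 z2 t l : orient x z1 z2 = 0 -> 0 <= t <= 1 -> 0 <= l <= 1 ->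
  closed_seg x z1 (lerp x (lerp z1 z2 t) l) \/ closed_seg x z2 (lerp x (lerp z1 z2 t) l).
Proof.
  intros Hflat Ht Hl. destruct (classic (x = z1)) as [<-|Hxz1].
  - right. exists (l * t). split; [nra|pt_eq].
  - destruct (collinear_lerp Hxz1 Hflat) as [c ->].
    assert (Hpt : lerp x (lerp z1 (lerp x z1 c) t) l = lerp x z1 (l * ((1 - t) * 1 + t * c)))
      by pt_eq.
    rewrite Hpt. destruct (scaled_between 1 c Hl Ht) as [m [Hm [E|E]]]; rewrite E;
      [left|right]; exists m; (split; [exact Hm|pt_eq]).
Qed.

Lemma barycentric_coords x z1 z2 : orient x z1 z2 <> 0 ->
  exists a1 b1 a2 b2 (alpha beta : pt -> R),
    affine a1 b1 alpha /\ affine a2 b2 beta /\ separating alpha beta /\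
    alpha x = 0 /\ beta x = 0 /\ alpha z1 = 1 /\ beta z1 = 0 /\ alpha z2 = 0 /\ beta z2 = 1.
Proof.
  intros Hnd. set (D := orient x z1 z2) in Hnd.
  set (alpha := fun q => orient x q z2 / D).
  set (beta := fun q => orient x z1 q / D).
  assert (Halpha : affine ((snd z2 - snd x) / D) (- (fst z2 - fst x) / D) alpha)
    by (intros q; unfold alpha, orient; simpl; field; exact Hnd).
  assert (Hbeta : affine (- (snd z1 - snd x) / D) ((fst z1 - fst x) / D) beta)
    by (intros q; unfold beta, orient; simpl; field; exact Hnd).
  exists ((snd z2 - snd x) / D), (- (fst z2 - fst x) / D), (- (snd z1 - snd x) / D),
    ((fst z1 - fst x) / D), alpha, beta.
  split; [exact Halpha|]. split; [exact Hbeta|]. split.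
  { apply (separating_det Halpha Hbeta).
    replace (_ - _) with (/ D) by (unfold D, orient in *; field; exact Hnd).
    apply Rinv_neq_0_compat, Hnd. }
  unfold alpha, beta; cbv beta; fold D.
  repeat split; first [field; exact Hnd | unfold orient, Rdiv; ring].
Qed.

Definition in_tri (g h : pt -> R) (p : pt) : Prop := 0 <= g p /\ 0 <= h p /\ g p + h p <= 1.

Lemma leaving_triangle a1 b1 a2 b2 g h q r : affine a1 b1 g -> affine a2 b2 h ->
  in_tri g h q -> g r + h r <= 1 -> (g r < 0 \/ h r < 0) ->
  exists y, closed_seg q r y /\ in_tri g h y /\ (g y = 0 \/ h y = 0).
Proof.
  intros Hg Hh [Hq1 [Hq2 Hq3]] Hr Hneg.
  destruct (first_exit (N := 2) (fun j => match j with O => g q | _ => h q end)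
                                (fun j => match j with O => g r | _ => h r end))
    as [t [m [Ht [Hm [Hzero Hall]]]]].
  - intros [|j] _; assumption.
  - destruct Hneg; [exists 0%nat|exists 1%nat]; repeat split; lra || lia.
  - exists (lerp q r t). split; [exists t; split; [exact Ht|reflexivity]|].
    unfold in_tri. rewrite (affine_lerp Hg), (affine_lerp Hh).
    pose proof (Hall 0%nat ltac:(lia)) as H0. pose proof (Hall 1%nat ltac:(lia)) as H1.
    split; [repeat split; [exact H0|exact H1|nra]|].
    destruct m as [|[|m]]; [left|right|lia]; exact Hzero.
Qed.

Definition free (D : pt -> Prop) (x z : pt) : Prop := forall p, closed_seg x z p -> ~ D p.

Lemma free_path D x y : free D x y -> path_in_compl D x y.
Proof.
  intros Hfree. exists (lerp x y).
  unfold lerp, padd, pscale; simpl. split; [reg|]. split; [reg|].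
  split; [|split]; [apply injective_projections; simpl; ring ..|].
  intros t Ht. apply Hfree. exists t. split; [exact Ht|reflexivity].
Qed.

Lemma ray_unbounded (F : pt -> Prop) x0 v1 v2 :
  0 < v1 * v1 + v2 * v2 ->
  (forall tau, 0 <= tau -> F (fst x0 + tau * v1, snd x0 + tau * v2)) ->
  ~ bounded_region F.
Proof.
  intros HN Hray [M HM].
  set (N := v1 * v1 + v2 * v2) in HN.
  set (tau := 1 + (8 * M * M + 1) / N).
  assert (Htau : 0 <= tau /\ 8 * M * M < tau * tau * N).
  { assert (0 <= (8 * M * M + 1) / N)
      by (unfold Rdiv; apply Rmult_le_pos; [nra|apply Rlt_le, Rinv_0_lt_compat; lra]).
    assert (tau * N = N + (8 * M * M + 1)) by (unfold tau; field; lra).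
    split; [unfold tau; lra|nra]. }
  destruct (HM x0) as [A1 A2]; [replace x0 with (fst x0 + 0 * v1, snd x0 + 0 * v2)
    by (destruct x0; simpl; f_equal; ring); apply Hray; lra|].
  destruct (HM _ (Hray tau (proj1 Htau))) as [B1 B2]. simpl in B1, B2.
  assert (Hbounds : forall z, Rabs z <= M -> - M <= z <= M).
  { intros z Hz. pose proof (Rle_abs z). pose proof (Rle_abs (- z)). rewrite Rabs_Ropp in *. lra. }
  apply Hbounds in A1, A2, B1, B2.
  assert (tau * tau * N = (tau * v1) * (tau * v1) + (tau * v2) * (tau * v2)) by (unfold N; ring).
  nra.
Qed.

Lemma continuity_eps h : continuity h ->
  forall s e, 0 < e -> exists d, 0 < d /\ forall t, Rabs (t - s) < d -> Rabs (h t - h s) < e.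
Proof.
  intros Hc s e He. destruct (Hc s e He) as [d [Hd H]]. exists d. split; [lra|].
  intros t Ht. destruct (Req_dec t s) as [->|Hne].
  - rewrite Rminus_diag, Rabs_R0. exact He.
  - apply (H t). split; [split; [exact I|auto]|]. simpl. unfold R_dist. exact Ht.
Qed.

Definition inbox (p : pt) (r : R) (q : pt) : Prop :=
  Rabs (fst q - fst p) < r /\ Rabs (snd q - snd p) < r.

Lemma inbox_seg p r a b q : inbox p r a -> inbox p r b -> closed_seg a b q -> inbox p r q.
Proof.
  intros [A1 A2] [B1 B2] [t [Ht ->]].
  assert (Hconv : forall A B, Rabs A < r -> Rabs B < r -> Rabs ((1 - t) * A + t * B) < r).
  { intros A B HA HB.
    apply Rle_lt_trans with ((1 - t) * Rabs A + t * Rabs B).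
    - eapply Rle_trans; [apply Rabs_triang|].
      rewrite !Rabs_mult, (Rabs_pos_eq (1 - t)), (Rabs_pos_eq t) by lra. lra.
    - destruct (Req_dec t 1) as [->|Ht1]; [lra|].
      assert ((1 - t) * Rabs A < (1 - t) * r) by (apply Rmult_lt_compat_l; lra).
      assert (t * Rabs B <= t * r) by (apply Rmult_le_compat_l; lra). lra. }
  unfold inbox, lerp, padd, pscale; simpl. split.
  - replace ((1 - t) * fst a + t * fst b - fst p)
      with ((1 - t) * (fst a - fst p) + t * (fst b - fst p)) by ring. auto.
  - replace ((1 - t) * snd a + t * snd b - snd p)
      with ((1 - t) * (snd a - snd p) + t * (snd b - snd p)) by ring. auto.
Qed.

Definition near (A : pt -> Prop) (p : pt) : Prop :=
  exists r, 0 < r /\ forall q, inbox p r q -> A q.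

Lemma near_and A B p : near A p -> near B p -> near (fun q => A q /\ B q) p.
Proof.
  intros [r1 [Hr1 H1]] [r2 [Hr2 H2]]. exists (Rmin r1 r2). split; [apply Rmin_glb_lt; auto|].
  intros q [Q1 Q2]. pose proof (Rmin_l r1 r2). pose proof (Rmin_r r1 r2).
  split; [apply H1|apply H2]; split; lra.
Qed.

Lemma near_forall_lt (A : nat -> pt -> Prop) p N :
  (forall i, (i < N)%nat -> near (A i) p) -> near (fun q => forall i, (i < N)%nat -> A i q) p.
Proof.
  induction N as [|N IH]; intros HA.
  - exists 1. split; [lra|]. intros; lia.
  - destruct (near_and (IH (fun i Hi => HA i (Nat.lt_lt_succ_r _ _ Hi)))
                       (HA N (Nat.lt_succ_diag_r N)))
      as [r [Hr H]].
    exists r. split; [exact Hr|]. intros q Hq i Hi. destruct (H q Hq) as [Hlow HN].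
    destruct (Nat.eq_dec i N) as [->|Hne]; [exact HN|apply Hlow; lia].
Qed.

Lemma near_impl (P : Prop) A p : (P -> near A p) -> near (fun q => P -> A q) p.
Proof.
  intros H. destruct (classic P) as [HP|HP].
  - destruct (H HP) as [r [Hr Hq]]. exists r. split; [exact Hr|]. intros q Hin _. auto.
  - exists 1. split; [lra|]. intros q _ HP'. contradiction.
Qed.

(** The complement of a closed segment is open: the distance from a point
    off the segment to the (compact) segment is positive. *)
Lemma near_seg_compl a b p : ~ closed_seg a b p -> near (fun q => ~ closed_seg a b q) p.
Proof.
  intros Hp.
  set (dist2 := fun t => (fst p - ((1 - t) * fst a + t * fst b)) ^ 2
                         + (snd p - ((1 - t) * snd a + t * snd b)) ^ 2).
  destruct (continuity_ab_min dist2 0 1) as [tm [Hmin Htm]]; [lra|intros; unfold dist2; reg|].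
  assert (Hpos : 0 < dist2 tm).
  { unfold dist2.
    destruct (Req_dec (fst p - ((1 - tm) * fst a + tm * fst b)) 0) as [E1|E1];
    [destruct (Req_dec (snd p - ((1 - tm) * snd a + tm * snd b)) 0) as [E2|E2]|].
    - exfalso. apply Hp. exists tm. split; [exact Htm|].
      unfold lerp, padd, pscale. apply injective_projections; simpl; lra.
    - rewrite E1. pose proof (Rsqr_pos_lt _ E2). unfold Rsqr in *. simpl. lra.
    - pose proof (Rsqr_pos_lt _ E1). unfold Rsqr in *.
      pose proof (pow2_ge_0 (snd p - ((1 - tm) * snd a + tm * snd b))). simpl in *. lra. }
  set (r := Rmin 1 (dist2 tm / 4)).
  assert (Hr1 : r <= 1) by apply Rmin_l. assert (Hr2 : r <= dist2 tm / 4) by apply Rmin_r.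
  exists r. split; [apply Rmin_glb_lt; lra|].
  intros q [B1 B2] [t [Ht ->]].
  specialize (Hmin t Ht). unfold dist2 in Hmin at 2.
  unfold lerp, padd, pscale in B1, B2; simpl in B1, B2.
  apply Rabs_def2 in B1, B2.
  assert (r * r <= r * 1) by (apply Rmult_le_compat_l; lra).
  simpl in Hmin. nra.
Qed.

Lemma next_cases k i : (i < k)%nat ->
  ((S i < k)%nat /\ (S i mod k = S i)%nat) \/ (S i = k /\ (S i mod k = 0)%nat).
Proof.
  intros Hi. destruct (Nat.eq_dec (S i) k) as [E|E].
  - right. split; [exact E|]. rewrite E. apply Nat.Div0.mod_same.
  - left. split; [lia|]. apply Nat.mod_small. lia.
Qed.

Lemma next_lt k i : (i < k)%nat -> (S i mod k < k)%nat.
Proof. intros. apply Nat.mod_upper_bound. lia. Qed.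

Lemma next_neq k i : (2 <= k)%nat -> (i < k)%nat -> (S i mod k <> i)%nat.
Proof. intros Hk Hi. destruct (next_cases Hi) as [[_ ->]|[Heq ->]]; lia. Qed.

Lemma next_next_neq k i : (3 <= k)%nat -> (i < k)%nat -> (S (S i mod k) mod k <> i)%nat.
Proof.
  intros Hk Hi. destruct (next_cases Hi) as [[Hlt ->]|[Heq ->]].
  - destruct (next_cases Hlt) as [[_ ->]|[Heq' ->]]; lia.
  - rewrite Nat.mod_small; lia.
Qed.

Lemma prev_exists k i : (3 <= k)%nat -> (i < k)%nat ->
  exists p, (p < k)%nat /\ (S p mod k = i)%nat /\ p <> i /\ (S i mod k <> p)%nat.
Proof.
  intros Hk Hi. exists (match i with O => k - 1 | S i' => i' end)%nat.
  destruct i as [|i'].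
  - destruct (@next_cases k (k - 1)) as [[A _]|[_ ->]]; [lia|lia|].
    rewrite Nat.mod_small by lia. lia.
  - destruct (@next_cases k i') as [[_ ->]|[A _]]; [lia| |lia].
    repeat split; try lia. destruct (next_cases Hi) as [[_ ->]|[Heq ->]]; lia.
Qed.

Record setting (n : nat) (adj : nat -> nat -> Prop) (C : list nat) (f : nat -> pt)
    (s : R) (lam : nat -> nat -> R) : Prop := {
  adj_range : forall u v, adj u v -> (u < n)%nat /\ (v < n)%nat;
  adj_sym : forall u v, adj u v -> adj v u;
  adj_irrefl : forall u, ~ adj u u;
  cycle_length : (3 <= length C)%nat;
  cycle_range : forall v, In v C -> (v < n)%nat;
  cycle_adj : forall i, (i < length C)%nat -> adj (nth i C O) (nth (S i mod length C) C O);
  sign_unit : s = 1 \/ s = -1;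
  polygon_strict : forall i j, (i < length C)%nat -> (j < length C)%nat -> j <> i ->
    j <> (S i mod length C)%nat ->
    0 < s * orient (f (nth i C O)) (f (nth (S i mod length C) C O)) (f (nth j C O));
  balanced : forall u, internal n C u ->
    (forall v, (v < n)%nat -> 0 <= lam u v) /\
    (forall v, (v < n)%nat -> (0 < lam u v <-> adj u v)) /\
    rsum n (lam u) = 1 /\
    fst (f u) = rsum n (fun v => lam u v * fst (f v)) /\
    snd (f u) = rsum n (fun v => lam u v * snd (f v));
  vertex_inj : forall u v, (u < n)%nat -> (v < n)%nat -> f u = f v -> u = v }.

Section ConvexCombinationMap.

Variables (n : nat) (adj : nat -> nat -> Prop) (C : list nat) (f : nat -> pt).
Variables (s : R) (lam : nat -> nat -> R).
Hypothesis HS : setting n adj C f s lam.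

Local Notation k := (length C).
Local Notation nxt i := (S i mod length C)%nat.
Local Notation corner i := (f (nth i C O)).
Local Notation Dr := (drawing n adj f).

Lemma balanced_affine u a b g : internal n C u -> affine a b g ->
  g (f u) = rsum n (fun v => lam u v * g (f v)).
Proof.
  intros Hu Hg. destruct (balanced HS Hu) as [_ [_ [Hsum [Hx Hy]]]].
  rewrite (rsum_ext _ (fun v => lam u v * (a * fst (f v) + b * snd (f v) + g (0, 0))))
    by (intros v _; rewrite <- Hg; reflexivity).
  rewrite rsum_affine, <- Hx, <- Hy, Hsum, Rmult_1_r. apply Hg.
Qed.

Lemma balanced_flat u a b g : internal n C u -> affine a b g ->
  (forall v, (v < n)%nat -> adj u v -> g (f u) <= g (f v)) ->
  forall v, (v < n)%nat -> adj u v -> g (f v) = g (f u).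
Proof.
  intros Hu Hg Hge. destruct (balanced HS Hu) as [Hpos [Hadj [Hsum _]]].
  assert (Hzero : forall v, (v < n)%nat -> lam u v * (g (f v) - g (f u)) = 0).
  { apply rsum_nonneg_zero.
    - intros v Hv. destruct (classic (adj u v)) as [Ha|Ha].
      + apply Rmult_le_pos; [apply Hpos, Hv|]. specialize (Hge v Hv Ha). lra.
      + replace (lam u v) with 0; [lra|].
        destruct (Hpos v Hv) as [Hlt|Heq]; [exfalso; apply Ha, Hadj; assumption|auto].
    - rewrite (rsum_ext _ (fun v => lam u v * (1 * g (f v) + 0 * 0 + (- g (f u)))))
        by (intros; ring).
      rewrite rsum_affine, <- (balanced_affine Hu Hg).
      rewrite Hsum. ring. }
  intros v Hv Ha. assert (0 < lam u v) by (apply Hadj; assumption).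
  specialize (Hzero v Hv). apply Rmult_integral in Hzero. destruct Hzero; lra.
Qed.

Lemma internal_descent u a1 b1 a2 b2 g h : internal n C u ->
  affine a1 b1 g -> affine a2 b2 h -> separating g h ->
  exists v, (v < n)%nat /\ adj u v /\ lex_lt (g (f v)) (h (f v)) (g (f u)) (h (f u)).
Proof.
  intros Hu Hg Hh Hsep. apply NNPP. intro Hno.
  assert (Hg_flat : forall v, (v < n)%nat -> adj u v -> g (f v) = g (f u)).
  { apply (balanced_flat Hu Hg). intros v Hv Ha. apply Rnot_lt_le. intro Hlt.
    apply Hno. exists v. repeat split; auto. left; exact Hlt. }
  assert (Hh_flat : forall v, (v < n)%nat -> adj u v -> h (f v) = h (f u)).
  { apply (balanced_flat Hu Hh). intros v Hv Ha. apply Rnot_lt_le. intro Hlt.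
    apply Hno. exists v. repeat split; auto. right. split; [apply Hg_flat|]; assumption. }
  (* the weights sum to 1, so [u] has a neighbour [v]; it is mapped onto [f u] *)
  destruct (balanced HS Hu) as [Hpos [Hadj [Hsum _]]].
  destruct (rsum_exists_nonzero n (lam u)) as [v [Hv Hnz]]; [lra|].
  assert (Ha : adj u v) by (apply Hadj; [exact Hv|]; specialize (Hpos v Hv); lra).
  assert (Hfv : f v = f u) by (apply Hsep; [apply Hg_flat|apply Hh_flat]; assumption).
  destruct Hu as [Hun _].
  apply (adj_irrefl HS u). rewrite <- (vertex_inj HS Hv Hun Hfv) at 2. exact Ha.
Qed.

Definition side (i : nat) (p : pt) : R := s * orient (corner i) (corner (nxt i)) p.

Definition inside (p : pt) : Prop := forall i, (i < k)%nat -> 0 < side i p.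

Lemma side_affine i :
  affine (- s * (snd (corner (nxt i)) - snd (corner i)))
         (s * (fst (corner (nxt i)) - fst (corner i))) (side i).
Proof. apply affine_orient. Qed.

Lemma nth_cycle_lt j : (j < k)%nat -> (nth j C O < n)%nat.
Proof. intros Hj. apply (cycle_range HS), nth_In, Hj. Qed.

Lemma side_at_corner i j : (i < k)%nat -> (j < k)%nat -> 0 <= side i (corner j).
Proof.
  intros Hi Hj. unfold side.
  destruct (Nat.eq_dec j i) as [->|Hji];
    [replace (orient _ _ _) with 0 by (unfold orient; ring); lra|].
  destruct (Nat.eq_dec j (nxt i)) as [->|Hjn];
    [replace (orient _ _ _) with 0 by (unfold orient; ring); lra|].
  apply Rlt_le, (polygon_strict HS); assumption.
Qed.

Lemma corner_edge_distinct i : (i < k)%nat -> corner i <> corner (nxt i).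
Proof.
  intros Hi Heq. pose proof (cycle_length HS) as Hk. pose proof (next_lt Hi) as Hi'.
  assert (Hk2 : (2 <= k)%nat) by lia.
  pose proof (polygon_strict HS Hi (next_lt Hi') (next_next_neq Hk Hi) (next_neq Hk2 Hi'))
    as Hpos.
  rewrite Heq in Hpos. unfold orient in Hpos. lra.
Qed.

Lemma external_descent j x a b g : (j < k)%nat -> inside x -> affine a b g ->
  g x < g (corner j) ->
  exists j', (j' < k)%nat /\ adj (nth j C O) (nth j' C O) /\ g (corner j') < g (corner j).
Proof.
  intros Hj Hx Hg Hlt. pose proof (cycle_length HS) as Hk.
  destruct (prev_exists Hk Hj) as [p [Hp [Hpj [Hpneq Hnp]]]].
  destruct (Rlt_dec (g (corner p)) (g (corner j))) as [Hpl|Hpl].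
  { exists p. split; [exact Hp|]. split; [|exact Hpl].
    pose proof (cycle_adj HS Hp) as Ha. rewrite Hpj in Ha. exact (adj_sym HS _ _ Ha). }
  destruct (Rlt_dec (g (corner (nxt j))) (g (corner j))) as [Hnl|Hnl].
  { exists (nxt j). split; [exact (next_lt Hj)|]. split; [exact (cycle_adj HS Hj)|exact Hnl]. }
  exfalso. apply (Rlt_not_le _ _ Hlt).
  apply (corner_cone (s := s) (A := corner p) (B := corner (nxt j)) Hg).
  - pose proof (polygon_strict HS Hp (next_lt Hj) Hnp) as Hcorner. rewrite Hpj in Hcorner.
    apply Hcorner. apply next_neq; [lia|exact Hj].
  - pose proof (Hx p Hp) as Hside. unfold side in Hside. rewrite Hpj in Hside. exact Hside.
  - exact (Hx j Hj).
  - apply Rnot_lt_le, Hpl.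
  - apply Rnot_lt_le, Hnl.
Qed.

Lemma on_boundary i p : (i < k)%nat -> (forall j, (j < k)%nat -> 0 <= side j p) ->
  side i p = 0 -> closed_seg (corner i) (corner (nxt i)) p.
Proof.
  intros Hi Hall Hzero. pose proof (cycle_length HS) as Hk. pose proof (next_lt Hi) as Hi'.
  destruct (prev_exists Hk Hi) as [q [Hq [Hqi [Hqneq Hnq]]]].
  apply (on_edge (s := s) (Q := corner q) (E := corner (nxt (nxt i)))).
  - pose proof (polygon_strict HS Hq Hi' Hnq) as Hcorner. rewrite Hqi in Hcorner.
    apply Hcorner. apply next_neq; [lia|exact Hi].
  - apply (polygon_strict HS Hi' Hi); [apply not_eq_sym, next_neq; lia|].
    apply not_eq_sym, next_next_neq; assumption.
  - exact Hzero.
  - pose proof (Hall q Hq) as Hside. unfold side in Hside. rewrite Hqi in Hside. exact Hside.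
  - exact (Hall _ Hi').
Qed.

(** For a separating pair of affine functions, the lexicographically lowest
    vertex is external; so the minimum of [g] over the vertices is attained at
    a corner of the polygon. *)
Lemma lowest_vertex_external a1 b1 a2 b2 g h :
  affine a1 b1 g -> affine a2 b2 h -> separating g h ->
  exists j, (j < k)%nat /\ forall v, (v < n)%nat -> g (corner j) <= g (f v).
Proof.
  intros Hg Hh Hsep.
  assert (Hn : exists v, (v < n)%nat /\ True).
  { exists (nth 0 C O). split; [|exact I]. apply nth_cycle_lt. pose proof (cycle_length HS). lia. }
  destruct (lex_min (fun _ => True) (fun v => g (f v)) (fun v => h (f v)) Hn)
    as [w [Hw [_ Hmin]]].
  destruct (classic (In w C)) as [Hin|Hout].
  - destruct (In_nth C w O Hin) as [j [Hj Hjw]]. exists j. split; [exact Hj|].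
    intros v Hv. rewrite Hjw. apply Rnot_lt_le. intro Hlt. apply (Hmin v Hv I). left; exact Hlt.
  - exfalso. destruct (internal_descent (conj Hw Hout) Hg Hh Hsep) as [v [Hv [_ Hlt]]].
    exact (Hmin v Hv I Hlt).
Qed.

Lemma vertex_in_polygon v i : (v < n)%nat -> (i < k)%nat -> 0 <= side i (f v).
Proof.
  intros Hv Hi.
  pose proof (sqdist_pos (corner_edge_distinct Hi)) as HN.
  set (d1 := fst (corner (nxt i)) - fst (corner i)) in HN.
  set (d2 := snd (corner (nxt i)) - snd (corner i)) in HN.
  (* the coordinate along the edge separates points together with [side i] *)
  set (along := fun p : pt => d1 * fst p + d2 * snd p).
  assert (Halong : affine d1 d2 along) by (intros p; unfold along; simpl; ring).
  assert (Hsep : separating (side i) along).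
  { apply (separating_det (side_affine i) Halong). fold d1 d2.
    destruct (sign_unit HS) as [-> | ->]; nra. }
  destruct (lowest_vertex_external (side_affine i) Halong Hsep) as [j [Hj Hlow]].
  pose proof (side_at_corner Hi Hj). pose proof (Hlow v Hv). lra.
Qed.

Lemma drawing_in_polygon p i : Dr p -> (i < k)%nat -> 0 <= side i p.
Proof.
  intros [[v [Hv ->]] | [u [v [Ha [t [Ht ->]]]]]] Hi.
  - exact (vertex_in_polygon Hv Hi).
  - destruct (adj_range HS _ _ Ha) as [Hu Hv]. rewrite (affine_lerp (side_affine i)).
    pose proof (vertex_in_polygon Hu Hi). pose proof (vertex_in_polygon Hv Hi). nra.
Qed.

(** A bounded face lies inside the polygon: from a point on the wrong side
    of an edge, the ray along the outward normal avoids the drawing. *)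
Lemma bounded_face_inside x0 F : ~ Dr x0 ->
  (forall x, F x <-> path_in_compl (Dr) x0 x) -> bounded_region F -> inside x0.
Proof.
  intros Hx0 HF Hbd i Hi. apply Rnot_le_lt. intro Hle.
  pose proof (sqdist_pos (corner_edge_distinct Hi)) as HN.
  set (d1 := fst (corner (nxt i)) - fst (corner i)) in HN.
  set (d2 := snd (corner (nxt i)) - snd (corner i)) in HN.
  assert (Hs2 : s * s = 1) by (destruct (sign_unit HS) as [-> | ->]; ring).
  assert (Hdecr : forall tau,
    side i (fst x0 + tau * (s * d2), snd x0 + tau * - (s * d1))
    = side i x0 - tau * (d1 * d1 + d2 * d2)).
  { intros tau.
    transitivity (side i x0 - (s * s) * tau * (d1 * d1 + d2 * d2));
      [unfold side, orient, d1, d2; simpl; ring|rewrite Hs2; ring]. }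
  apply (ray_unbounded (F := F) x0 (v1 := s * d2) (v2 := - (s * d1))); [nra| |exact Hbd].
  intros tau Htau. apply HF, free_path. intros p [t [Ht ->]].
  replace (lerp _ _ t) with (fst x0 + (t * tau) * (s * d2), snd x0 + (t * tau) * - (s * d1))
    by pt_eq.
  destruct (Req_dec (t * tau) 0) as [E|E].
  - rewrite E. replace (_, _) with x0 by (destruct x0; simpl; f_equal; ring). exact Hx0.
  - intro HD. pose proof (drawing_in_polygon HD Hi) as Hin. rewrite Hdecr in Hin.
    assert (0 < t * tau) by (destruct (Rle_lt_or_eq_dec 0 (t * tau)); [nra|auto|lra]).
    nra.
Qed.

(** A free segment starting inside the polygon stays inside: otherwise it
    would leave the polygon through an edge, which is part of the drawing. *)
Lemma free_stays_inside x z : inside x -> free (Dr) x z -> inside z.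
Proof.
  intros Hx Hfree. apply NNPP. intro Hz.
  assert (Hout : exists i, (i < k)%nat /\ side i z <= 0 /\ side i z < side i x).
  { apply NNPP. intro Hno. apply Hz. intros i Hi. apply Rnot_le_lt. intro Hle.
    apply Hno. exists i. specialize (Hx i Hi). repeat split; [exact Hi|exact Hle|lra]. }
  destruct (first_exit (fun i => side i x) (fun i => side i z)
              (fun i Hi => Rlt_le _ _ (Hx i Hi)) Hout) as [t [m [Ht [Hm [Hzero Hall]]]]].
  assert (Hq : forall i, side i (lerp x z t) = (1 - t) * side i x + t * side i z)
    by (intros i; apply (affine_lerp (side_affine i))).
  apply (Hfree (lerp x z t)); [exists t; split; [exact Ht|reflexivity]|].
  right. exists (nth m C O), (nth (nxt m) C O). split; [exact (cycle_adj HS Hm)|].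
  apply on_boundary; [exact Hm| |]; [intros j Hj; rewrite Hq; exact (Hall j Hj)|].
  rewrite Hq. exact Hzero.
Qed.

Lemma triangle_vertex a1 b1 a2 b2 g h p : affine a1 b1 g -> affine a2 b2 h ->
  (forall y, in_tri g h y -> (g y = 0 \/ h y = 0) -> ~ Dr y) ->
  Dr p -> in_tri g h p -> exists v, (v < n)%nat /\ in_tri g h (f v).
Proof.
  intros Hg Hh Hlegs [[v [Hv ->]] | [u [v [Ha Hp]]]] Hin; [exists v; auto|].
  destruct (adj_range HS _ _ Ha) as [Hu Hv].
  apply NNPP. intro Hno.
  (* one endpoint [r] of the edge lies below the hypotenuse, but outside *)
  assert (Hend : exists r, (r = f u \/ r = f v) /\ g r + h r <= 1).
  { destruct (Rle_dec (g (f u) + h (f u)) 1) as [Hu1|Hu1]; [exists (f u); auto|].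
    destruct (Rle_dec (g (f v) + h (f v)) 1) as [Hv1|Hv1]; [exists (f v); auto|].
    exfalso. destruct Hp as [t [Ht ->]]. destruct Hin as [_ [_ Hin]].
    rewrite (affine_lerp Hg), (affine_lerp Hh) in Hin.
    apply Rnot_le_lt in Hu1, Hv1.
    assert (0 <= t * (g (f v) + h (f v) - 1)) by (apply Rmult_le_pos; lra).
    destruct (Req_dec t 1) as [->|Ht1]; [lra|].
    assert (0 < (1 - t) * (g (f u) + h (f u) - 1)) by (apply Rmult_lt_0_compat; lra).
    lra. }
  destruct Hend as [r [Hr Hsum]].
  assert (Hneg : g r < 0 \/ h r < 0).
  { apply NNPP. intro Hpos. apply Hno.
    destruct Hr as [-> | ->]; [exists u|exists v]; repeat split; auto; lra. }
  destruct (leaving_triangle r Hg Hh Hin Hsum Hneg) as [y [Hy [Ty Hleg]]].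
  apply (Hlegs y Ty Hleg). right. exists u, v. split; [exact Ha|].
  apply (seg_sub Hp (r := r)); [destruct Hr as [-> | ->]; [apply seg_start|apply seg_end]|exact Hy].
Qed.

(** Otherwise take the
    lexicographically lowest vertex in the triangle for the key [(g + h, g)];
    it has a lower neighbour (by [internal_descent] or [external_descent]),
    which must lie outside the triangle, so the edge between them crosses a
    leg. *)
Lemma triangle_free a1 b1 a2 b2 g h x : affine a1 b1 g -> affine a2 b2 h -> separating g h ->
  inside x -> g x = 0 -> h x = 0 ->
  (forall y, in_tri g h y -> (g y = 0 \/ h y = 0) -> ~ Dr y) ->
  forall p, in_tri g h p -> ~ Dr p.
Proof.
  intros Hg Hh Hsep Hx Hgx Hhx Hlegs p Hp HD.
  set (gh := fun q => g q + h q).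
  assert (Hgh : affine (a1 + a2) (b1 + b2) gh) by (apply affine_add; assumption).
  assert (Hsep' : separating gh g) by (intros q r E1 E2; apply Hsep; unfold gh in E1; lra).
  destruct (triangle_vertex Hg Hh Hlegs HD Hp) as [v0 Hv0].
  destruct (lex_min (fun v => in_tri g h (f v)) (fun v => gh (f v)) (fun v => g (f v))
                    (ex_intro _ v0 Hv0))
    as [w [Hw [Tw Hmin]]].
  assert (HDw : Dr (f w)) by (left; exists w; auto).
  assert (Hpos : gh x < gh (f w)).
  { unfold gh. rewrite Hgx, Hhx. destruct Tw as [T1 [T2 T3]].
    apply Rnot_le_lt. intro Hle.
    apply (Hlegs (f w) (conj T1 (conj T2 T3))); [left; lra|exact HDw]. }
  assert (Hdown : exists v, (v < n)%nat /\ adj w v /\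
                    lex_lt (gh (f v)) (g (f v)) (gh (f w)) (g (f w))).
  { destruct (classic (In w C)) as [Hin|Hout].
    - destruct (In_nth C w O Hin) as [j [Hj Hjw]]. rewrite <- Hjw in Hpos |- *.
      destruct (external_descent Hj Hx Hgh Hpos) as [j' [Hj' [Ha Hlt]]].
      exists (nth j' C O). split; [exact (nth_cycle_lt Hj')|]. split; [exact Ha|left; exact Hlt].
    - exact (internal_descent (conj Hw Hout) Hgh Hg Hsep'). }
  destruct Hdown as [v [Hv [Ha Hlt]]].
  destruct (classic (in_tri g h (f v))) as [Tv|Tv]; [exact (Hmin v Hv Tv Hlt)|].
  assert (Hsum : g (f v) + h (f v) <= 1)
    by (destruct Tw as [_ [_ T3]]; unfold lex_lt, gh in *; lra).
  assert (Hneg : g (f v) < 0 \/ h (f v) < 0)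
    by (apply NNPP; intro; apply Tv; repeat split; lra).
  destruct (leaving_triangle (f v) Hg Hh Tw Hsum Hneg) as [y [Hy [Ty Hleg]]].
  apply (Hlegs y Ty Hleg). right. exists w, v. split; [exact Ha|exact Hy].
Qed.

Lemma free_triangle x z1 z2 t : inside x -> free Dr x z1 -> free Dr x z2 -> 0 <= t <= 1 ->
  free Dr x (lerp z1 z2 t).
Proof.
  intros Hx F1 F2 Ht p [l [Hl ->]].
  destruct (Req_dec (orient x z1 z2) 0) as [Hflat|Hnd].
  { destruct (flat_triangle_sides Hflat Ht Hl) as [Hside|Hside]; [apply F1|apply F2]; exact Hside. }
  destruct (barycentric_coords Hnd)
    as (a1 & b1 & a2 & b2 & alpha & beta & Halpha & Hbeta & Hsep & Ax & Bx & A1 & B1 & A2 & B2).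
  apply (triangle_free Halpha Hbeta Hsep Hx Ax Bx).
  - (* the legs of the triangle are its two free sides at [x] *)
    intros y [Ty1 [Ty2 Ty3]] [Hleg|Hleg].
    + apply F2. exists (beta y). split; [lra|].
      apply Hsep; rewrite (affine_lerp Halpha) || rewrite (affine_lerp Hbeta);
        rewrite ?Ax, ?A2, ?Bx, ?B2; lra.
    + apply F1. exists (alpha y). split; [lra|].
      apply Hsep; rewrite (affine_lerp Halpha) || rewrite (affine_lerp Hbeta);
        rewrite ?Ax, ?A1, ?Bx, ?B1; lra.
  - unfold in_tri. rewrite !(affine_lerp Halpha), !(affine_lerp Hbeta), Ax, Bx, A1, B1, A2, B2.
    split; [|split]; nra.
Qed.

Lemma free_trans x y z : inside x -> free Dr x y -> free Dr y z -> free Dr x z.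
Proof.
  intros Hx Fxy Fyz p [t [Ht ->]].
  assert (Fyx : free Dr y x) by (intros q Hq; apply Fxy, seg_sym, Hq).
  apply (free_triangle (free_stays_inside Hx Fxy) Fyx Fyz Ht). apply seg_end.
Qed.

Lemma drawing_compl_open p : ~ Dr p -> near (fun q => ~ Dr q) p.
Proof.
  intros Hp.
  assert (Hnear : near (fun q => (forall v, (v < n)%nat -> ~ closed_seg (f v) (f v) q) /\
      (forall u, (u < n)%nat -> forall v, (v < n)%nat -> adj u v -> ~ closed_seg (f u) (f v) q)) p).
  { apply near_and.
    - apply (near_forall_lt (fun v q => ~ closed_seg (f v) (f v) q)). intros v Hv.
      apply near_seg_compl. intros [t [_ E]]. apply Hp. left. exists v.
      split; [exact Hv|]. rewrite E. apply lerp_same.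
    - apply (near_forall_lt (fun u q => forall v, (v < n)%nat -> adj u v ->
                                              ~ closed_seg (f u) (f v) q)). intros u Hu.
      apply (near_forall_lt (fun v q => adj u v -> ~ closed_seg (f u) (f v) q)). intros v Hv.
      apply near_impl. intros Ha. apply near_seg_compl.
      intro Hs. apply Hp. right. exists u, v. auto. }
  destruct Hnear as [r [Hr Hbox]]. exists r. split; [exact Hr|].
  intros q Hq [[v [Hv ->]] | [u [v [Ha Hs]]]].
  - apply (proj1 (Hbox _ Hq) v Hv). apply seg_start.
  - destruct (adj_range HS _ _ Ha) as [Hu Hv]. exact (proj2 (Hbox q Hq) u Hu v Hv Ha Hs).
Qed.

Section AlongAPath.

Variables (x : pt) (g : R -> pt).
Hypothesis Hx : inside x.
Hypothesis Hg1 : continuity (fun t => fst (g t)).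
Hypothesis Hg2 : continuity (fun t => snd (g t)).
Hypothesis Hg0 : g 0 = x.
Hypothesis Havoid : forall t, 0 <= t <= 1 -> ~ Dr (g t).

Lemma path_continuous t0 e : 0 < e ->
  exists d, 0 < d /\ forall t, Rabs (t - t0) < d -> inbox (g t0) e (g t).
Proof.
  intros He.
  destruct (continuity_eps Hg1 t0 He) as [d1 [Hd1 H1]].
  destruct (continuity_eps Hg2 t0 He) as [d2 [Hd2 H2]].
  exists (Rmin d1 d2). split; [apply Rmin_glb_lt; assumption|].
  intros t Ht. pose proof (Rmin_l d1 d2). pose proof (Rmin_r d1 d2).
  split; [apply H1|apply H2]; lra.
Qed.

Lemma free_at_start : free Dr x (g 0).
Proof. rewrite Hg0. intros p [l [_ ->]]. rewrite lerp_same, <- Hg0. apply Havoid. lra. Qed.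

(** If the segments to all earlier path points are free, so are those to
    all path points in a neighbourhood of [t0]: near [g t0] the complement of
    the drawing contains a box, and [free_trans] passes through it. *)
Lemma free_near_time t0 : 0 <= t0 <= 1 -> (forall t, 0 <= t < t0 -> free Dr x (g t)) ->
  exists d, 0 < d /\ forall t, 0 <= t <= 1 -> Rabs (t - t0) < d -> free Dr x (g t).
Proof.
  intros Ht0 Hbefore.
  destruct (drawing_compl_open (Havoid Ht0)) as [r [Hr Hbox]].
  destruct (path_continuous t0 Hr) as [d [Hd Hgd]].
  assert (Hstart : exists t1, Rabs (t1 - t0) < d /\ free Dr x (g t1)).
  { destruct (Rle_dec (t0 - d / 2) 0) as [Hle|Hgt].
    - exists 0. split; [rewrite Rabs_left1 by lra; lra|exact free_at_start].
    - exists (t0 - d / 2). split; [rewrite Rabs_left by lra; lra|apply Hbefore; lra]. }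
  destruct Hstart as [t1 [Ht1 Hfree1]].
  exists d. split; [exact Hd|]. intros t Ht Htd.
  apply (free_trans Hx Hfree1). intros q Hq. apply Hbox.
  exact (inbox_seg (Hgd t1 Ht1) (Hgd t Htd) Hq).
Qed.

Lemma free_at_end : free Dr x (g 1).
Proof.
  set (E := fun t => 0 <= t <= 1 /\ forall t', 0 <= t' <= t -> free Dr x (g t')).
  assert (E0 : E 0)
    by (split; [lra|]; intros t' Ht'; replace t' with 0 by lra; exact free_at_start).
  destruct (completeness E) as [s0 [Hub Hlub]];
    [exists 1; intros t [Ht _]; lra|exists 0; exact E0|].
  assert (Hs0 : 0 <= s0 <= 1) by (split; [apply Hub, E0|apply Hlub; intros t [Ht _]; lra]).
  assert (Hbefore : forall t, 0 <= t < s0 -> free Dr x (g t)).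
  { intros t Ht. apply NNPP. intro Hno. assert (s0 <= t); [|lra].
    apply Hlub. intros e [He Hall]. apply Rnot_lt_le. intro Hlt. apply Hno, Hall. lra. }
  destruct (free_near_time Hs0 Hbefore) as [d [Hd Hnear]].
  assert (Hs1 : s0 = 1).
  { apply NNPP. intro Hne.
    assert (Hnext : E (Rmin 1 (s0 + d / 2))).
    { pose proof (Rmin_l 1 (s0 + d / 2)). pose proof (Rmin_r 1 (s0 + d / 2)).
      split; [split; [apply Rmin_glb|]; lra|].
      intros t' Ht'. destruct (Rlt_dec t' s0) as [Hlt|Hge]; [apply Hbefore; lra|].
      apply Hnear; [lra|]. rewrite Rabs_pos_eq; lra. }
    pose proof (Hub _ Hnext). destruct (Rle_dec 1 (s0 + d / 2)).
    - rewrite Rmin_left in * by lra. lra.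
    - rewrite Rmin_right in * by lra. lra. }
  apply Hnear; [lra|]. rewrite Hs1, Rminus_diag, Rabs_R0. exact Hd.
Qed.

End AlongAPath.

Lemma path_free x y : inside x -> path_in_compl Dr x y -> free Dr x y.
Proof.
  intros Hx [g [Hg1 [Hg2 [Hg0 [Hgy Havoid]]]]]. rewrite <- Hgy.
  exact (free_at_end g Hx Hg1 Hg2 Hg0 Havoid).
Qed.

End ConvexCombinationMap.

Theorem lemma1p3 (n : nat) (adj : nat -> nat -> Prop) (C : list nat) (f : nat -> pt) :
  simple_graph n adj ->
  simple_cycle n adj C ->
  convex_combination_map n adj C f ->
  is_embedding n adj f ->
  forall F : pt -> Prop, face n adj f F -> bounded_region F -> convex_set F.
Proof.
  intros [Hrange [Hsym Hirr]] [Hlen [_ [Hcrange Hcadj]]]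
         [_ [[_ [s [Hs Hpoly]]] [lam Hlam]]] [Hinj _] F [x0 [Hx0 HF]] Hbd.
  assert (HS : setting n adj C f s lam) by (constructor; assumption).
  pose proof (bounded_face_inside HS Hx0 HF Hbd) as Hin.
  assert (Hseen : forall x, F x -> free (drawing n adj f) x0 x)
    by (intros x Hx; apply (path_free HS Hin), HF, Hx).
  (* so the triangle spanned with two points of the face is free, and the
     segment between them lies in the face *)
  intros x y t Hx Hy Ht. apply HF, free_path.
  exact (free_triangle HS Hin (Hseen x Hx) (Hseen y Hy) Ht).
Qed.
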